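(* Let $T^1\subseteq T^2\subseteq T$ with $T^2\setminus T^1=\{r\}$ a singleton, let $\mathbf{z}^1$ be an optimal solution of ODMTS-DFD$(T^1)$ and $\mathbf{z}^2$ an optimal solution of ODMTS-DFD$(T^2)$. Then $g^r(\mathbf{z}^2)\le g^r(\mathbf{z}^1)$.
   Context: Let $N$ be a finite set of nodes and $H \subseteq N$ a set of hubs. An ODMTS design is a vector $\mathbf{z}=(z_{hl})_{h,l\in H}\in\{0,1\}^{H\times H}$ satisfying $\sum_{l\in H} z_{hl}=\sum_{l\in H} z_{lh}$ for all $h\in H$; opening arc $(h,l)$ costs $\beta_{hl}$. Let $T$ be a finite set of trips; trip $r$ has origin $or^r\in N$, destination $de^r\in N$, number of riders $p^r> 0$, and cost coefficients $\tau^r_{hl}$ ($h,l\in H$) and $\gamma^r_{ij}$ ($i,j\in N$); $t_{hl}, t^{wait}_{hl}$ are bus travel and waiting times and $t_{ij}$ shuttle travel times. Given a design $\mathbf{z}$, a route for $r$ is a pair of binary vectors $x^r\in\{0,1\}^{H\times H}$, $y^r\in\{0,1\}^{N\times N}$ with $x^r_{hl}\le z_{hl}$ and, for every $i\in N$, $\sum_{h\in H}(x^r_{ih}-x^r_{hi})\,[\text{if } i\in H] + \sum_{j\in N}(y^r_{ij}-y^r_{ji})$ equal to $1$ if $i=or^r$, $-1$ if $i=de^r$, and $0$ otherwise. Its cost is $g^r=\sum_{h,l}\tau^r_{hl}x^r_{hl}+\sum_{i,j}\gamma^r_{ij}y^r_{ij}$ and its travel time is $f^r=\sum_{h,l}(t_{hl}+t^{wait}_{hl})x^r_{hl}+\sum_{i,j}t_{ij}y^r_{ij}$.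 The route of $r$ under $\mathbf{z}$ is a route minimizing $(g^r,f^r)$ lexicographically; $g^r(\mathbf{z})$ denotes its cost. For $\hat T\subseteq T$, ODMTS-DFD$(\hat T)$ is the problem of minimizing $\sum_{h,l\in H}\beta_{hl}z_{hl}+\sum_{r\in\hat T}p^r g^r(\mathbf{z})$ over designs $\mathbf{z}$. *)

From HB Require Import structures.
From mathcomp Require Import all_boot all_order all_algebra.
Set Implicit Arguments. Unset Strict Implicit. Unset Printing Implicit Defensive.
Import Order.TTheory GRing.Theory Num.Theory.
Local Open Scope ring_scope.

Section ODMTS.
Variables (R : realFieldType) (N : finType) (H : {set N}) (Tr : finType).

Definition hub : Type := {h : N | h \in H}.
HB.instance Definition _ := Finite.on hub.

Record instance := Instance {
  beta   : hub -> hub -> R;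
  orig   : Tr -> N;
  dest   : Tr -> N;
  riders : Tr -> R;
  tau    : Tr -> hub -> hub -> R;
  gamma  : Tr -> N -> N -> R;
  tbus   : hub -> hub -> R;
  twait  : hub -> hub -> R;
  tshut  : N -> N -> R
}.

Variable I : instance.

Definition design := {ffun hub * hub -> bool}.

Definition is_design (z : design) : bool :=
  [forall h : hub, (\sum_(l : hub) z (h, l) == \sum_(l : hub) z (l, h))%N].

Definition route := ({ffun hub * hub -> bool} * {ffun N * N -> bool})%type.

Definition flow (rho : route) (i : N) : R :=
  (\sum_(a : hub * hub | val a.1 == i) (rho.1 a)%:R
   - \sum_(a : hub * hub | val a.2 == i) (rho.1 a)%:R)
  + \sum_(j : N) ((rho.2 (i, j))%:R - (rho.2 (j, i))%:R).

Definition rhs (r : Tr) (i : N) : R :=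
  if i == orig I r then 1 else if i == dest I r then -1 else 0.

Definition is_route (z : design) (r : Tr) (rho : route) : bool :=
  [forall a, rho.1 a ==> z a] && [forall i, flow rho i == rhs r i].

Definition rcost (r : Tr) (rho : route) : R :=
  \sum_(a : hub * hub) tau I r a.1 a.2 * (rho.1 a)%:R
  + \sum_(a : N * N) gamma I r a.1 a.2 * (rho.2 a)%:R.

Definition rtime (rho : route) : R :=
  \sum_(a : hub * hub) (tbus I a.1 a.2 + twait I a.1 a.2) * (rho.1 a)%:R
  + \sum_(a : N * N) tshut I a.1 a.2 * (rho.2 a)%:R.

Definition lex_opt (z : design) (r : Tr) (rho : route) : bool :=
  is_route z r rho &&
  [forall rho' : route, is_route z r rho' ==>
     ((rcost r rho < rcost r rho')
      || ((rcost r rho == rcost r rho') && (rtime rho <= rtime rho')))].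

(* g^r(z): the cost of the (a) lexicographically optimal route of r under z
   (all lex-optimal routes share the same cost; 0 if no route exists) *)
Definition gcost (z : design) (r : Tr) : R :=
  match [pick rho | lex_opt z r rho] with
  | Some rho => rcost r rho
  | None => 0
  end.

Definition objective (S : {set Tr}) (z : design) : R :=
  \sum_(a : hub * hub) beta I a.1 a.2 * (z a)%:R
  + \sum_(r in S) riders I r * gcost z r.

Definition dfd_optimal (S : {set Tr}) (z : design) : Prop :=
  is_design z /\ forall z' : design, is_design z' -> objective S z <= objective S z'.

End ODMTS.

From HB Require Import structures.
From mathcomp Require Import all_boot all_order all_algebra.
Set Implicit Arguments.
Unset Strict Implicit.
Unset Printing Implicit Defensive.
Import Order.TTheory GRing.Theory Num.Theory.
Local Open Scope ring_scope.

(* Exchange argument: the objective of ODMTS-DFD(T^2) is that of ODMTS-DFD(T^1)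
   plus p^r g^r(z).  Comparing z^1 and z^2 under both objectives and adding the
   two optimality inequalities cancels the T^1 part, leaving
   p^r g^r(z^2) <= p^r g^r(z^1); divide by p^r > 0. *)

Lemma setU1_setD_set1 (T : finType) (A B : {set T}) (x : T) :
  A \subset B -> B :\: A = [set x] -> B = x |: A.
Proof. by move=> /setIidPr sAB dBA; rewrite -(setID B A) sAB dBA setUC. Qed.

Lemma lerD_exchange (R : numDomainType) (fa fb ga gb : R) :
  fa <= fb -> fb + gb <= fa + ga -> gb <= ga.
Proof.
by move=> le_f le_fg; rewrite -(lerD2l fb) (le_trans le_fg) // lerD2r.
Qed.

Lemma objective_setU1 (R : realFieldType) (N : finType) (H : {set N})
    (Tr : finType) (I : instance R H Tr) (S : {set Tr}) (r : Tr) (z : design H) :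
  r \notin S ->
  objective I (r |: S) z = objective I S z + riders I r * gcost I z r.
Proof. by move=> rS; rewrite /objective big_setU1 //= addrCA addrC. Qed.

Theorem mainTheorem4 (R : realFieldType) (N : finType) (H : {set N}) (Tr : finType)
  (I : instance R H Tr) (T1 T2 : {set Tr}) (r : Tr) (z1 z2 : design H) :
  (forall t : Tr, 0 < riders I t) ->
  T1 \subset T2 -> T2 :\: T1 = [set r] ->
  dfd_optimal I T1 z1 -> dfd_optimal I T2 z2 ->
  gcost I z2 r <= gcost I z1 r.
Proof.
move=> riders_gt0 sT12 dT21 [z1_design z1_opt] [z2_design z2_opt].
have rT1 : r \notin T1.
  by have := set11 r; rewrite -dT21 inE => /andP[].
have opt2 := z2_opt z1 z1_design.
rewrite (setU1_setD_set1 sT12 dT21) !objective_setU1 // in opt2.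
rewrite -(ler_pM2l (riders_gt0 r)).
exact: lerD_exchange (z1_opt z2 z2_design) opt2.
Qed.
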